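(* Let $x_i,y_i\in\mathbb{Z}$ ($1\le i\le N$) with $x_i<x_{i+1}$ and $y_i<y_{i+1}$ for all $i$. For $\sigma\in\mathbb{S}_N$ define the Laurent monomial $$h_\sigma(\xi_1,\dots,\xi_N)=\prod_{(b,a)}\frac{\xi_b}{\xi_a}\prod_{i=1}^N\xi_{\sigma(i)}^{\,x_i-y_{\sigma(i)}-1},$$ the first product over all inversions $(b,a)$ of $\sigma$, and for $\gamma\in\{1,\dots,N\}$ let $h^\gamma_\sigma$ be the function of $\eta$ and $\xi_\delta$ ($\delta\neq\gamma$) obtained by substituting $\xi_\gamma=\eta/\prod_{\delta\ne\gamma}\xi_\delta$ into $h_\sigma$. (i) If $\sigma,\sigma'\in\mathbb{S}_N$ differ only by an interchange of two adjacent entries $\alpha$ and $\beta$, and $\gamma\ne\alpha,\beta$, then $h^\gamma_\sigma|_{\xi_\alpha=\xi_\beta}=h^\gamma_{\sigma'}|_{\xi_\alpha=\xi_\beta}$. (ii) If moreover $\gamma$ appears to the right of $\alpha$ and $\beta$ (in $\sigma$, equivalently in $\sigma'$) and $\gamma<\alpha,\beta$, then the exponents of $\xi_\alpha$ and of $\xi_\beta$ in $h^\gamma_\sigma$ and in $h^\gamma_{\sigma'}$ are at most $0$.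
   Context: Permutations are in one-line notation $\sigma(1)\cdots\sigma(N)$; an inversion $(b,a)$ of $\sigma$ is a pair of entries with $b>a$ and $b$ appearing to the left of $a$ in $\sigma$. *)

From HB Require Import structures.
From mathcomp Require Import all_boot all_order all_algebra all_fingroup.
Set Implicit Arguments. Unset Strict Implicit. Unset Printing Implicit Defensive.
Import Order.TTheory GRing.Theory Num.Theory.
Local Open Scope ring_scope.

(* A Laurent monomial  prod_v X_v^(m v)  in the variables V is represented by its
   integer exponent vector m.  Product of monomials = sum of exponent vectors,
   inverse = negation, k-th power = scaling by k. *)
Definition lmono (V : finType) := {ffun V -> int}.

Definition mvar (V : finType) (v : V) : lmono V := [ffun w => (w == v)%:R].

Definition msubst (U W : finType) (f : U -> lmono W) (m : lmono U) : lmono W :=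
  \sum_(u : U) (f u) *~ m u.

(* Entries and positions are 0-indexed ('I_N); an inversion (b,a) is a pair of
   entries with b > a and b to the left of a, i.e. sigma^-1 b < sigma^-1 a. *)
Definition h_sigma (N : nat) (x y : 'I_N -> int) (s : {perm 'I_N}) : lmono 'I_N :=
  (\sum_(b : 'I_N) \sum_(a : 'I_N | (a < b)%N && ((s^-1)%g b < (s^-1)%g a)%N)
      (mvar b - mvar a))
  + \sum_(i : 'I_N) (mvar (s i)) *~ (x i - y (s i) - 1).

(* Variables of h^gamma: None = eta, Some d = xi_d (Some gamma does not occur). *)
Definition eta (N : nat) : lmono (option 'I_N) := mvar None.
Definition xi (N : nat) (d : 'I_N) : lmono (option 'I_N) := mvar (Some d).

Definition h_gamma (N : nat) (x y : 'I_N -> int) (g : 'I_N) (s : {perm 'I_N})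
  : lmono (option 'I_N) :=
  msubst (fun c : 'I_N =>
            if c == g then eta N - \sum_(d : 'I_N | d != g) xi d else xi c)
         (h_sigma x y s).

(* Restriction xi_alpha = xi_beta: replace the variable xi_beta by xi_alpha. *)
Definition restr_eq (N : nat) (a b : 'I_N) (m : lmono (option 'I_N))
  : lmono (option 'I_N) :=
  msubst (fun v : option 'I_N => if v == Some b then xi a else mvar v) m.

Definition increasing (N : nat) (x : 'I_N -> int) : Prop :=
  forall i j : 'I_N, (j : nat) = i.+1 -> x i < x j.

Definition adjacent_swap (N : nat) (s s' : {perm 'I_N}) (a b : 'I_N) : Prop :=
  [/\ a != b,
      (((s^-1)%g a).+1 = (s^-1)%g b \/ ((s^-1)%g b).+1 = (s^-1)%g a)%N &
      forall k : 'I_N, s' k = tperm a b (s k)].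

From Pilot Require Import Defs.
From HB Require Import structures.
From mathcomp Require Import all_boot all_order all_algebra all_fingroup.
From mathcomp Require Import zify.
Import Order.TTheory GRing.Theory Num.Theory.
Local Open Scope ring_scope.

(* The inversion factor of h_sigma contributes to the exponent of xi_c the
   number of smaller entries to the right of c minus the number of larger
   entries to its left, which is c - sigma^-1(c).  Hence xi_c has exponent
   e_c = c - sigma^-1(c) + x_(sigma^-1(c)) - y_c - 1 in h_sigma, and xi_d has
   exponent e_d - e_gamma in h^gamma_sigma.  Swapping the entries alpha and
   beta fixes e_c for every other c and preserves e_alpha + e_beta, which is
   all that survives of these two exponents once xi_alpha = xi_beta.  For (ii),
   e_d - e_gamma <= 0 when gamma < d and d stands left of gamma, since x and y
   grow by at least 1 per step.  Neither part needs the swapped entries to be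
   adjacent. *)

Lemma sum_ord_lt {N : nat} (c : 'I_N) : (\sum_(a : 'I_N) (a < c : nat))%N = c.
Proof.
rewrite -big_mkcond /= -(big_ord_widen _ (fun=> 1%N) (ltnW (ltn_ord c))).
by rewrite sum1_card card_ord.
Qed.

Lemma sum_perm_lt {N : nat} (p : {perm 'I_N}) (c : 'I_N) :
  (\sum_(a : 'I_N) (p a < p c : nat))%N = p c.
Proof.
rewrite (reindex_inj (@perm_inj _ p^-1)) /=.
under eq_bigr do rewrite permKV.
exact: sum_ord_lt.
Qed.

Lemma inversion_balance {N : nat} (p : {perm 'I_N}) (c : 'I_N) :
  (\sum_(a : 'I_N) ((a < c) && (p c < p a)))%N%:R
    - (\sum_(a : 'I_N) ((c < a) && (p a < p c)))%N%:R = c%:Z - (p c)%:Z :> int.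
Proof.
suff : (\sum_(a : 'I_N) ((a < c) && (p c < p a) : nat) + p c
        = c + \sum_(a : 'I_N) ((c < a) && (p a < p c) : nat))%N.
  by move=> /(congr1 Posz); rewrite !natz !PoszD; lia.
rewrite -[X in (_ + X = _)%N](sum_perm_lt p c).
rewrite -[X in (_ = X + _)%N](sum_ord_lt c).
rewrite -!big_split /=; apply: eq_bigr => a _.
have [->|ac] := eqVneq a c; first by rewrite !ltnn !andbF.
have pac : p a != p c by rewrite (inj_eq perm_inj).
by move: ac pac; rewrite -!val_eqE /=; case: ltngtP => //= _ _; case: ltngtP.
Qed.

Lemma mvarE {V : finType} (v w : V) : mvar v w = (w == v)%:R.
Proof. by rewrite ffunE. Qed.

Lemma msubstE {U W : finType} (f : U -> lmono W) (m : lmono U) (w : W) :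
  msubst f m w = \sum_(u : U) f u w *~ m u.
Proof. by rewrite sum_ffunE; apply: eq_bigr => u _; rewrite ffunMzE. Qed.

Lemma coef_sum_mvarB {V : finType} (P : V -> V -> bool) (c : V) :
  (\sum_(b : V) \sum_(a : V | P a b) (mvar b - mvar a)) c
  = (\sum_(a : V) P a c)%N%:R - (\sum_(b : V) P c b)%N%:R.
Proof.
rewrite sum_ffunE.
under [LHS]eq_bigr => b _ do
  (rewrite sum_ffunE; under eq_bigr => a _ do rewrite !ffunE; rewrite sumrB).
rewrite sumrB !natr_sum; congr (_ - _).
- rewrite [LHS](bigD1 c) //= eqxx [X in _ + X]big1 ?addr0 => [|b /negbTE bc].
    by rewrite big_mkcond; apply: eq_bigr => a _; case: (P a c).
  by rewrite big1 // eq_sym bc.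
- apply: eq_bigr => b _; rewrite big_mkcond (bigD1 c) //= eqxx.
  rewrite [X in _ + X]big1 ?addr0 => [|a /negbTE ac]; first by case: (P c b).
  by rewrite eq_sym ac; case: (P a b).
Qed.

Lemma coef_sum_perm_mvar {V : finType} (s : {perm V}) (k : V -> int) (c : V) :
  (\sum_(i : V) mvar (s i) *~ k i) c = k ((s^-1)%g c).
Proof.
rewrite sum_ffunE (bigD1 ((s^-1)%g c)) //= ffunMzE mvarE permKV eqxx intz.
rewrite big1 ?addr0 // => i ic; rewrite ffunMzE mvarE.
suff /negbTE -> : c != s i by rewrite mul0rz.
by apply: contra ic => /eqP ->; rewrite permK.
Qed.

Lemma h_sigmaE {N : nat} (x y : 'I_N -> int) (s : {perm 'I_N}) (c : 'I_N) :
  h_sigma x y s c = c%:Z - ((s^-1)%g c)%:Z + x ((s^-1)%g c) - y c - 1.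
Proof.
pose inverted (a b : 'I_N) := (a < b)%N && ((s^-1)%g b < (s^-1)%g a)%N.
rewrite ffunE (coef_sum_mvarB inverted).
by rewrite coef_sum_perm_mvar permKV inversion_balance !addrA.
Qed.

Lemma xiE {N : nat} (d : 'I_N) (v : option 'I_N) :
  xi d v = if v is Some e then (e == d)%:R else 0.
Proof. by rewrite mvarE; case: v. Qed.

Lemma h_gammaE {N : nat} (x y : 'I_N -> int) (g : 'I_N) (s : {perm 'I_N})
    (v : option 'I_N) :
  h_gamma x y g s v =
  match v with
  | None => h_sigma x y s g
  | Some d => if d == g then 0 else h_sigma x y s d - h_sigma x y s g
  end.
Proof.
rewrite msubstE (bigD1 g) //= eqxx; move: (h_sigma x y s) => m.
rewrite [X in _ + X](eq_bigr (fun i => xi i v *~ m i)) => [|i /negbTE -> //].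
rewrite ffunE [X in Defs.eta N v + X]ffunE sum_ffunE.
rewrite mulrzDl mulNrz mulrz_suml [Defs.eta N v]mvarE.
case: v => [d|].
  have sum_xi (F : 'I_N -> int) :
      \sum_(i | i != g) xi i (Some d) *~ F i = if d == g then 0 else F d.
    rewrite big_mkcond (bigD1 d) //= xiE eqxx intz big1 ?addr0.
      by rewrite eq_sym; case: eqP.
    by move=> i /negbTE di; rewrite xiE [d == i]eq_sym di mul0rz; case: ifP.
  by rewrite !sum_xi mul0rz sub0r; case: (d == g); rewrite ?oppr0 ?add0r // addrC.
by rewrite !big1 ?subr0 ?addr0 ?intz // => i _; rewrite xiE mul0rz.
Qed.

Lemma restr_eqE {N : nat} (a b : 'I_N) (M : lmono (option 'I_N))
    (v : option 'I_N) :
  restr_eq a b M v =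
    (if v == Some b then 0 else M v) + (if v == Some a then M (Some b) else 0).
Proof.
rewrite msubstE (bigD1 (Some b)) //= eqxx [xi a v]mvarE addrC.
congr (_ + _); last first.
  by case: (v == Some a); rewrite ?intz ?mul0rz.
rewrite (eq_bigr (fun u => mvar u v *~ M u)) => [|u /negbTE -> //].
have [->|vb] := eqVneq v (Some b).
  by rewrite big1 // => u /negbTE ub; rewrite mvarE eq_sym ub mul0rz.
rewrite (bigD1 v) //= mvarE eqxx intz big1 ?addr0 // => u /andP[_ /negbTE uv].
by rewrite mvarE eq_sym uv mul0rz.
Qed.

Lemma restr_eq_congr {N : nat} (a b : 'I_N) (M M' : lmono (option 'I_N)) :
  a != b ->
  (forall v, v != Some a -> v != Some b -> M v = M' v) ->
  M (Some a) + M (Some b) = M' (Some a) + M' (Some b) ->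
  restr_eq a b M = restr_eq a b M'.
Proof.
move=> ab eqM eq_ab; apply/ffunP => v; rewrite !restr_eqE.
have [->|vb] := eqVneq v (Some b).
  by rewrite (inj_eq (@Some_inj _)) eq_sym (negbTE ab).
have [->|va] := eqVneq v (Some a); first exact: eq_ab.
by rewrite !addr0 eqM.
Qed.

Lemma permV_mul_tperm {T : finType} (s : {perm T}) (a b c : T) :
  ((s * tperm a b)^-1)%g c = (s^-1)%g (tperm a b c).
Proof. by rewrite invMg tpermV permM. Qed.

Section SwapTwoEntries.

Variables (N : nat) (x y : 'I_N -> int) (s : {perm 'I_N}) (a b : 'I_N).

Lemma h_sigma_tpermD {c : 'I_N} : c != a -> c != b ->
  h_sigma x y (s * tperm a b)%g c = h_sigma x y s c.
Proof. by move=> ca cb; rewrite !h_sigmaE permV_mul_tperm tpermD // eq_sym. Qed.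

Lemma h_sigma_tperm_sum :
  h_sigma x y (s * tperm a b)%g a + h_sigma x y (s * tperm a b)%g b
    = h_sigma x y s a + h_sigma x y s b.
Proof. rewrite !h_sigmaE !permV_mul_tperm tpermL tpermR; lia. Qed.

Lemma restr_h_gamma_tperm (g : 'I_N) : a != b -> g != a -> g != b ->
  restr_eq a b (h_gamma x y g (s * tperm a b)%g) = restr_eq a b (h_gamma x y g s).
Proof.
move=> ab ga gb; have hg := h_sigma_tpermD ga gb.
apply: restr_eq_congr => // [[d|] da db|]; rewrite !h_gammaE ?hg //.
  have [//|_] := eqVneq d g.
  by rewrite h_sigma_tpermD.
rewrite ![_ == g]eq_sym (negbTE ga) (negbTE gb).
have := h_sigma_tperm_sum; lia.
Qed.

End SwapTwoEntries.

Lemma increasing_gap {N : nat} {x : 'I_N -> int} : increasing x ->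
  forall i j : 'I_N, (i <= j)%N -> j%:Z - i%:Z <= x j - x i.
Proof.
move=> incx.
suff gap k (i j : 'I_N) : (j : nat) = (i + k)%N -> k%:Z <= x j - x i.
  by move=> i j ij; rewrite subzn // gap // subnKC.
elim: k j => [|k IHk] j ji.
  have -> : j = i by apply/val_inj; rewrite /= ji addn0.
  by rewrite subrr.
have lt_ik : (i + k < N)%N by have := ltn_ord j; lia.
have := IHk (Ordinal lt_ik) erefl.
have := incx (Ordinal lt_ik) j; rewrite ji addnS => /(_ erefl).
lia.
Qed.

Lemma h_gamma_le0 {N : nat} (x y : 'I_N -> int) (g : 'I_N) (s : {perm 'I_N})
    (d : 'I_N) :
  increasing x -> increasing y ->
  (g < d)%N -> ((s^-1)%g d < (s^-1)%g g)%N -> h_gamma x y g s (Some d) <= 0.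
Proof.
move=> incx incy gd sdg.
have dg : d != g by apply: contraTneq gd => ->; rewrite ltnn.
rewrite h_gammaE (negbTE dg) !h_sigmaE.
have := increasing_gap incy _ _ (ltnW gd).
have := increasing_gap incx _ _ (ltnW sdg).
lia.
Qed.

Theorem lemma3p5 (N : nat) (x y : 'I_N -> int) (sigma sigma' : {perm 'I_N})
    (alpha beta gamma : 'I_N) :
  increasing x -> increasing y ->
  adjacent_swap sigma sigma' alpha beta ->
  gamma != alpha -> gamma != beta ->
  restr_eq alpha beta (h_gamma x y gamma sigma)
    = restr_eq alpha beta (h_gamma x y gamma sigma') /\
  (((sigma^-1)%g alpha < (sigma^-1)%g gamma)%N -> ((sigma^-1)%g beta < (sigma^-1)%g gamma)%N ->
   (gamma < alpha)%N -> (gamma < beta)%N ->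
   [/\ h_gamma x y gamma sigma (Some alpha) <= 0,
       h_gamma x y gamma sigma (Some beta) <= 0,
       h_gamma x y gamma sigma' (Some alpha) <= 0 &
       h_gamma x y gamma sigma' (Some beta) <= 0]).
Proof.
move=> incx incy [ab _ sigma'E] ga gb.
have -> : sigma' = (sigma * tperm alpha beta)%g.
  by apply/permP => k; rewrite permM sigma'E.
split; first by rewrite restr_h_gamma_tperm.
move=> a_gamma b_gamma gamma_a gamma_b.
have ag : alpha != gamma by rewrite eq_sym.
have bg : beta != gamma by rewrite eq_sym.
by split; apply: h_gamma_le0;
  rewrite ?permV_mul_tperm ?tpermL ?tpermR ?(tpermD ag bg).
Qed.
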